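(* Let $X$ and $Y$ be Banach spaces, $T:X\to Y$ a bounded linear operator, and $Z$ a closed subspace of $X$. If $T[Z]$ is closed and complemented in $Y$ and $Z\cap\ker(T)$ is complemented in $X$, then $Z$ is complemented in $X$. *)

From HB Require Import structures.
From mathcomp Require Import all_boot all_order all_algebra.
From mathcomp Require Import all_classical all_reals all_analysis.
Set Implicit Arguments. Unset Strict Implicit. Unset Printing Implicit Defensive.
Import Order.TTheory GRing.Theory Num.Theory.
Import numFieldNormedType.Exports.
Local Open Scope classical_set_scope.
Local Open Scope ring_scope.

Definition linsubspace (K : numFieldType) (V : lmodType K) (A : set V) : Prop :=
  A 0 /\ forall (a : K) (x y : V), A x -> A y -> A (a *: x + y).

Definition complemented (K : numFieldType) (X : normedModType K) (Z : set X) : Prop :=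
  linsubspace Z /\ closed Z /\
  exists W : set X, linsubspace W /\ closed W /\ Z `&` W = [set 0] /\
    forall x : X, exists z w, Z z /\ W w /\ x = z + w.

From HB Require Import structures.
From mathcomp Require Import all_boot all_order all_algebra.
From mathcomp Require Import all_classical all_reals all_analysis.
Import Order.TTheory GRing.Theory Num.Theory.
Import numFieldNormedType.Exports.
Local Open Scope classical_set_scope.
Local Open Scope ring_scope.

(* If V complements Z ∩ ker T and W complements T[Z], then V ∩ T⁻¹[W] complements
   Z: writing Tx = Tz0 + w and x - z0 = k + v with k ∈ Z ∩ ker T, v ∈ V, we get
   x = (z0 + k) + v and Tv = w ∈ W; and an element of Z ∩ V ∩ T⁻¹[W] is sent into
   T[Z] ∩ W = 0, so it lies in Z ∩ ker T ∩ V = 0.  Closedness of the complement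
   comes from continuity of T. *)

Section LinearSubspaces.
Variables (K : numFieldType) (U : lmodType K).
Implicit Types A B : set U.

Lemma linsubspaceI A B : linsubspace A -> linsubspace B -> linsubspace (A `&` B).
Proof.
move=> [A0 Al] [B0 Bl]; split => // a x y [Ax Bx] [Ay By].
by split; [exact: Al | exact: Bl].
Qed.

Lemma linsubspace_meet0 A B : linsubspace A -> linsubspace B ->
  A `&` B `<=` [set 0] -> A `&` B = [set 0].
Proof.
by move=> [A0 _] [B0 _] AB0; apply/seteqP; split => // x /= ->.
Qed.

Lemma linsubspace_preimage (V : lmodType K) (T : {linear U -> V}) (A : set V) :
  linsubspace A -> linsubspace (T @^-1` A).
Proof.
move=> [A0 Al]; split => [|a x y Ax Ay]; first by rewrite /= linear0.
by rewrite /= linearP; exact: Al.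
Qed.

End LinearSubspaces.

Section ComplementThroughLinearMap.
Variables (K : numFieldType) (U V : lmodType K) (T : {linear U -> V}).
Variables (Z C : set U) (W : set V).

Lemma meet_preimage_complement_sub0 :
  (Z `&` T @^-1` [set 0]) `&` C `<=` [set 0] -> (T @` Z) `&` W `<=` [set 0] ->
  Z `&` (C `&` T @^-1` W) `<=` [set 0].
Proof.
move=> kerC0 TZW0 x [Zx [Cx WTx]].
have Tx0 : T x = 0 by apply: TZW0; split => //; exists x.
exact: kerC0.
Qed.

Lemma sum_preimage_complement : linsubspace Z ->
  (forall x, exists k c, (Z `&` T @^-1` [set 0]) k /\ C c /\ x = k + c) ->
  (forall y, exists t w, (T @` Z) t /\ W w /\ y = t + w) ->
  forall x, exists z c, Z z /\ (C `&` T @^-1` W) c /\ x = z + c.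
Proof.
move=> [_ Zl] kerC_sum TZW_sum x.
have [_ [w [[z0 Zz0 <-] [Ww Txe]]]] := TZW_sum (T x).
have [k [c [[Zk Tk0] [Cc xe]]]] := kerC_sum (x - z0).
have Tc : T c = w.
  have -> : c = x - z0 - k by rewrite xe addrAC subrr add0r.
  by rewrite !linearB Txe Tk0 subr0 addrAC subrr add0r.
exists (z0 + k), c; split; first by rewrite -[z0]scale1r; exact: Zl.
by split; [split => //=; rewrite Tc | rewrite -addrA -xe addrC subrK].
Qed.

End ComplementThroughLinearMap.

Theorem lemma2p2 (K : numFieldType) (X Y : completeNormedModType K)
  (T : {linear X -> Y}) (Tcont : continuous T)
  (Z : set X) (Zsub : linsubspace Z) (Zcl : closed Z)
  (hTZ : complemented (T @` Z))
  (hker : complemented (Z `&` T @^-1` [set 0])) :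
  complemented Z.
Proof.
case: hTZ => _ [_ [W [Wsub [Wcl [TZW0 TZW_sum]]]]].
case: hker => _ [_ [C [Csub [Ccl [kerC0 kerC_sum]]]]].
have CWsub : linsubspace (C `&` T @^-1` W).
  by apply: linsubspaceI => //; exact: linsubspace_preimage.
do 2 split => //; exists (C `&` T @^-1` W); split => //; split.
  by apply: closedI => //; apply: preimage_closed => // x _; exact: Tcont.
split; last exact: sum_preimage_complement.
apply: linsubspace_meet0 => //.
by apply: meet_preimage_complement_sub0; rewrite ?kerC0 ?TZW0.
Qed.
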